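(* Let $t\ge 1$ and let $n_1,\dots,n_k$ be nonnegative integers. Then \[ \mathcal{L}^{(t)}\Big(\prod_{i=1}^{k} U^{(t)}_{n_i}(x)\Big) \] equals the number of noncrossing set partitions of the totally ordered set $[n_1]\sqcup[n_2]\sqcup\dots\sqcup[n_k]$ in which every block has size $t+1$ and no block is contained in a single $[n_i]$.
   Context: Fix an integer $t\ge1$. For $n\ge 0$ let $P_n$ be the path graph with vertices $1,\dots,n$ and edges $\{i,i+1\}$. A $t$-path in $P_n$ is a set of $t+1$ consecutive vertices $\{i,i+1,\dots,i+t\}$ (together with its $t$ edges). The Chebyshev polynomial of the second kind of order $t$ is $U^{(t)}_n(x)=\sum_{F}(-1)^{|F|}x^{\,n-(t+1)|F|}$, the sum over all families $F$ of pairwise vertex-disjoint $t$-paths in $P_n$ (so $U^{(t)}_0=1$; fixed points get weight $x$, $t$-paths weight $-1$). A set partition of a totally ordered set is noncrossing if there are no $a<b<c<d$ with $a,c$ in one block and $b,d$ in a different block. Let $\mu^{(t)}_m$ be the number of noncrossing set partitions of $[m]=\{1,\dots,m\}$ all of whose blocks have size $t+1$ (with $\mu^{(t)}_0=1$), and let $\mathcal{L}^{(t)}$ be the linear functional on polynomials with $\mathcal{L}^{(t)}(x^m)=\mu^{(t)}_m$. The disjoint union $[n_1]\sqcup\dots\sqcup[n_k]$ is totally ordered by listing $[n_1]$ first (in its natural order), then $[n_2]$, etc. *)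

From HB Require Import structures.
From mathcomp Require Import all_boot all_order all_algebra.
Set Implicit Arguments. Unset Strict Implicit. Unset Printing Implicit Defensive.
Import Order.TTheory GRing.Theory Num.Theory.
Local Open Scope ring_scope.

(* Vertices of P_n are encoded 0-indexed as 'I_n (vertex v+1 <-> v).
   A family of pairwise vertex-disjoint t-paths is encoded by the set F of
   starting points: each i in F gives the t-path {i,...,i+t} (so i + t < n),
   and distinct starting points give disjoint paths iff they differ by > t. *)
Definition tpath_family (t n : nat) (F : {set 'I_n}) : bool :=
  [forall i in F, (i + t < n)%N] &&
  [forall i in F, forall j in F, (i < j)%N ==> (i + t < j)%N].

Arguments tpath_family : clear implicits.

Definition chebU (t n : nat) : {poly int} :=
  \sum_(F : {set 'I_n} | tpath_family t n F)
     ((-1) ^+ #|F|) *: 'X^((n - t.+1 * #|F|)%N).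

Definition noncrossing (m : nat) (P : {set {set 'I_m}}) : bool :=
  [forall B in P, forall B' in P, forall a : 'I_m, forall b : 'I_m,
     forall c : 'I_m, forall d : 'I_m,
     ~~ [&& B != B', (a < b)%N, (b < c)%N, (c < d)%N,
            a \in B, c \in B, b \in B' & d \in B']].

Arguments noncrossing : clear implicits.

Definition nc_uniform (m s : nat) (P : {set {set 'I_m}}) : bool :=
  [&& partition P [set: 'I_m], noncrossing m P & [forall B in P, #|B| == s]].

Arguments nc_uniform : clear implicits.

Definition mu (t m : nat) : nat := #|[set P | nc_uniform m t.+1 P]|.

Definition Lt (t : nat) (p : {poly int}) : int :=
  \sum_(i < size p) p`_i * (mu t i)%:Z.

(* For ns = [n_1; ...; n_k], the disjoint union [n_1] |_| ... |_| [n_k]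
   with its concatenation order is 'I_(sumn ns); seg ns j is the index i
   (0-based) of the part containing position j. *)
Definition seg (ns : seq nat) (j : nat) : nat :=
  count (fun i => (sumn (take i.+1 ns) <= j)%N) (iota 0 (size ns)).

Definition no_block_in_one_part (ns : seq nat)
    (P : {set {set 'I_(sumn ns)}}) : bool :=
  [forall B in P, exists x in B, exists y in B, seg ns x != seg ns y].
Arguments no_block_in_one_part : clear implicits.

From HB Require Import structures.
From mathcomp Require Import all_boot all_order all_algebra zify.
Import GRing.Theory.
Set Implicit Arguments. Unset Strict Implicit. Unset Printing Implicit Defensive.

(* Expanding the product over the concatenated path P_N, N = n_1 + ... + n_k, gives a
   signed sum, over the families F of disjoint t-paths each lying inside a single [n_i],
   of x^(N - (t+1)|F|).  Applying L turns each term into mu of the complement of the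
   paths of F, which counts the noncrossing (t+1)-uniform partitions of [N] having the
   t-paths of F among their blocks: a t-path is an interval, so it crosses no block.
   Exchanging the two sums, a partition s is counted with weight
   sum_(F subset S(s)) (-1)^|F|, where S(s) is the set of blocks of s that are t-paths
   inside a single [n_i]; this weight is 1 if S(s) is empty and 0 otherwise.  Finally
   S(s) is empty exactly when no block of s lies inside a single [n_i], because the hull
   of any block of a noncrossing partition contains a block that is an interval. *)

Lemma trivIset_block_eq (T : finType) (P : {set {set T}}) (B B' : {set T}) x :
  trivIset P -> B \in P -> B' \in P -> x \in B -> x \in B' -> B = B'.
Proof. by move=> tP BP B'P xB xB'; rewrite -(def_pblock tP BP xB) (def_pblock tP B'P xB'). Qed.

Lemma set_hull N (B : {set 'I_N}) : B != set0 ->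
  exists2 x : 'I_N, x \in B &
  exists2 y : 'I_N, y \in B & forall z, z \in B -> (x <= z <= y)%N.
Proof.
case/set0Pn => z0 z0B.
case: (arg_minnP val z0B) => x xB xmin; case: (arg_maxnP val z0B) => y yB ymax.
by exists x => //; exists y => // z zB; rewrite (xmin z zB); apply: ymax.
Qed.

Lemma noncrossingP {m : nat} {P : {set {set 'I_m}}} :
  reflect (forall (B B' : {set 'I_m}) (a b c d : 'I_m), B \in P -> B' \in P -> B != B' ->
             (a < b < c)%N -> (c < d)%N -> a \in B -> c \in B -> b \in B' -> d \in B' -> False)
          (noncrossing m P).
Proof.
apply: (iffP forall_inP) => [H B B' a b c d BP B'P nBB' /andP [ab bc] cd aB cB bB' dB'|H B BP].
  move: (H B BP) => /forall_inP /(_ B' B'P) /forallP /(_ a) /forallP /(_ b).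
  move=> /forallP /(_ c) /forallP /(_ d) /negP; apply.
  by rewrite nBB' ab bc cd aB cB bB' dB'.
apply/forall_inP => B' B'P.
apply/forallP => a; apply/forallP => b; apply/forallP => c; apply/forallP => d.
apply/negP => /and5P [nBB' ab bc cd /and4P [aB cB bB' dB']].
by apply: (H B B' a b c d); rewrite ?ab.
Qed.

Lemma noncrossingS m (P Q : {set {set 'I_m}}) :
  P \subset Q -> noncrossing m Q -> noncrossing m P.
Proof.
move=> /subsetP sPQ /noncrossingP ncQ; apply/noncrossingP => B B' a b c d BP B'P.
exact: ncQ (sPQ _ BP) (sPQ _ B'P).
Qed.

Lemma noncrossing_nested m (P : {set {set 'I_m}}) (B B' : {set 'I_m}) (x y j : 'I_m) :
  trivIset P -> noncrossing m P -> B \in P -> B' \in P -> B != B' ->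
  x \in B -> y \in B -> j \in B' -> (x < j < y)%N ->
  forall z, z \in B' -> (x < z < y)%N.
Proof.
move=> tP /noncrossingP ncP BP B'P nBB' xB yB jB' /andP [xj jy] z zB'.
have zB : z \notin B by apply: contra nBB' => zB; rewrite (trivIset_block_eq tP BP B'P zB zB').
have [zx zy] : (x != z :> nat) /\ (z != y :> nat).
  by split; apply: (contraNneq _ zB) => /val_inj; [move=> <- | move=> ->].
apply/andP; split; rewrite ltn_neqAle ?zx ?zy /= leqNgt; apply/negP.
  by move=> zx'; apply: (ncP B' B z x j y) => //; rewrite ?zx' ?xj // eq_sym.
by move=> yz; apply: (ncP B B' x j y z) => //; rewrite ?xj.
Qed.

Definition nc_uniform_on N s (S : {set 'I_N}) (P : {set {set 'I_N}}) : bool :=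
  [&& partition P S, noncrossing N P & [forall B in P, #|B| == s]].

Section Relabel.
Variables (m N : nat) (f : 'I_m -> 'I_N).
Hypothesis f_inj : injective f.
Hypothesis f_homo : {homo f : i j / (i < j)%N}.

Lemma noncrossing_imset (Q : {set {set 'I_m}}) :
  noncrossing N [set f @: (B : {set 'I_m}) | B in Q] = noncrossing m Q.
Proof.
have f_mono : {mono f : i j / (i < j)%N}.
  move=> i j; case: (ltngtP i j) => [/f_homo -> // | /f_homo /ltnW | /val_inj ->].
    by rewrite leqNgt => /negbTE.
  by rewrite ltnn.
apply/noncrossingP/noncrossingP => ncQ.
  move=> B B' a b c d BQ B'Q nBB' abc cd aB cB bB' dB'.
  apply: (ncQ (f @: B) (f @: B') (f a) (f b) (f c) (f d)); rewrite ?f_mono ?imset_f //.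
  by rewrite (inj_eq (imset_inj f_inj)).
move=> _ _ a b c d /imsetP [B BQ ->] /imsetP [B' B'Q ->].
rewrite (inj_eq (imset_inj f_inj)) => nBB' abc cd.
move=> /imsetP [a0 a0B Ea] /imsetP [c0 c0B Ec] /imsetP [b0 b0B' Eb] /imsetP [d0 d0B' Ed].
rewrite {}Ea {}Eb {}Ec {}Ed !f_mono in abc cd.
exact: ncQ BQ B'Q nBB' abc cd a0B c0B b0B' d0B'.
Qed.

Lemma nc_uniform_on_imset s (Q : {set {set 'I_m}}) :
  nc_uniform_on s (f @: setT) [set f @: (B : {set 'I_m}) | B in Q] = nc_uniform m s Q.
Proof.
rewrite /nc_uniform_on /nc_uniform imset_partition // noncrossing_imset; congr [&& _, _ & _].
apply/forall_inP/forall_inP => sizeQ B.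
  by move=> BQ; rewrite -(card_imset _ f_inj); apply: sizeQ; rewrite imset_f.
by case/imsetP=> B0 B0Q ->; rewrite card_imset //; apply: sizeQ.
Qed.

End Relabel.

Lemma enum_val_ltn N (S : {set 'I_N}) : {homo @enum_val _ (pred_of_set S) : i j / (i < j)%N}.
Proof.
have lt_trans : transitive (fun x y : 'I_N => (x < y)%N) by move=> x y z; apply: ltn_trans.
have ord_sorted : sorted (fun x y : 'I_N => (x < y)%N) (enum 'I_N).
  by have := iota_ltn_sorted 0 N; rewrite -val_enum_ord sorted_map.
have S_sorted : sorted (fun x y : 'I_N => (x < y)%N) (enum S).
  by rewrite /enum_mem -enumT; apply: sorted_filter.
move=> i j ij; have x0 := enum_val i; rewrite !(enum_val_nth x0).
by apply: (sorted_ltn_nth lt_trans x0 S_sorted) => //; rewrite inE -cardE.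
Qed.

Lemma card_nc_uniform_on N s (S : {set 'I_N}) :
  #|[set P | nc_uniform_on s S P]| = #|[set Q | nc_uniform #|S| s Q]|.
Proof.
pose f := @enum_val _ (pred_of_set S).
have f_inj : injective f := @enum_val_inj _ _.
have fS : f @: setT = S.
  apply/setP => x; apply/imsetP/idP => [[i _ ->]|xS]; first exact: enum_valP.
  by exists (enum_rank_in xS x); rewrite /f ?enum_rankK_in.
pose Phi (Q : {set {set 'I_#|S|}}) := [set f @: (B : {set 'I_#|S|}) | B in Q].
have Phi_inj : injective Phi by do 2!apply: imset_inj.
rewrite -(card_imset _ Phi_inj); apply: eq_card => P; rewrite inE.
apply/idP/imsetP => [ncP|[Q]]; last first.
  by rewrite inE => ncQ ->; rewrite -fS nc_uniform_on_imset //; apply: enum_val_ltn.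
have fK : {in P, forall B, f @: (f @^-1: (B : {set 'I_N})) = B}.
  move=> B BP; apply/setP => x; apply/imsetP/idP => [[i]|xB]; first by rewrite inE => ? ->.
  have xS : x \in S by case/and3P: ncP => partP _ _; apply: subsetP (partitionS partP BP) _ xB.
  by exists (enum_rank_in xS x); rewrite ?inE /f enum_rankK_in.
have PhiK : Phi [set f @^-1: (B : {set 'I_N}) | B in P] = P.
  apply/setP => B; apply/imsetP/idP => [[_ /imsetP [B0 B0P ->] ->]|BP]; first by rewrite fK.
  by exists (f @^-1: B); rewrite ?fK // imset_f.
exists [set f @^-1: (B : {set 'I_N}) | B in P] => //.
by rewrite inE -(nc_uniform_on_imset f_inj (@enum_val_ltn N S)) fS -/(Phi _) PhiK.
Qed.

Lemma card_interval N a k : (a + k < N)%N ->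
  #|[set j : 'I_N | (a <= j <= a + k)%N]| = k.+1.
Proof.
elim: k => [|k IHk] akN.
  rewrite addn0 in akN *; rewrite -(cards1 (Ordinal akN)); apply: eq_card => j.
  by rewrite !inE -eqn_leq eq_sym -val_eqE.
have -> : [set j : 'I_N | (a <= j <= a + k.+1)%N] =
          Ordinal akN |: [set j : 'I_N | (a <= j <= a + k)%N].
  by apply/setP => j; rewrite !inE -val_eqE /=; lia.
rewrite cardsU1 IHk; last lia.
by rewrite inE /=; lia.
Qed.

Section TPaths.
Variables (N t : nat).

Definition tpath (i : 'I_N) : {set 'I_N} := [set j : 'I_N | (i <= j <= i + t)%N].

Definition tpaths (F : {set 'I_N}) : {set {set 'I_N}} := [set tpath i | i in F].

Definition tpath_spaced (F : {set 'I_N}) : bool :=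
  [forall i in F, forall j in F, (i < j)%N ==> (i + t < j)%N].

Lemma card_tpath (i : 'I_N) : (i + t < N)%N -> #|tpath i| = t.+1.
Proof. exact: card_interval. Qed.

Lemma tpath_self (i : 'I_N) : i \in tpath i.
Proof. by rewrite inE leqnn leq_addr. Qed.

Lemma tpath_inj : injective tpath.
Proof.
move=> i j eq_ij; apply/val_inj/eqP; rewrite eqn_leq.
have := tpath_self j; rewrite -eq_ij inE => /andP [-> _].
by have := tpath_self i; rewrite eq_ij inE => /andP [-> _].
Qed.

Lemma tpath_convex (i a b c : 'I_N) :
  (a <= b <= c)%N -> a \in tpath i -> c \in tpath i -> b \in tpath i.
Proof. by rewrite !inE; lia. Qed.

Lemma tpath_spacedP (F : {set 'I_N}) :
  reflect (forall i j : 'I_N, i \in F -> j \in F -> (i < j)%N -> (i + t < j)%N) (tpath_spaced F).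
Proof.
apply: (iffP forall_inP) => [H i j iF jF|H i iF].
  by move: (H i iF) => /forall_inP /(_ j jF) /implyP.
by apply/forall_inP => j jF; apply/implyP; apply: H.
Qed.

Lemma trivIset_tpaths (F : {set 'I_N}) : tpath_spaced F -> trivIset (tpaths F).
Proof.
move=> /tpath_spacedP spF; apply/trivIsetP => _ _ /imsetP [i iF ->] /imsetP [j jF ->].
rewrite (inj_eq tpath_inj) => nij.
have sep : (i + t < j)%N || (j + t < i)%N.
  by case: (ltngtP i j) nij => [/(spF i j iF jF) ->|/(spF j i jF iF) ->|/val_inj ->]; rewrite ?orbT ?eqxx.
rewrite -setI_eq0; apply/eqP/setP => x; rewrite !inE; apply/negP => /andP [/andP [ix xi] /andP [jx xj]].
by case/orP: sep; lia.
Qed.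

Lemma card_cover_tpaths (F : {set 'I_N}) : tpath_family t N F -> #|cover (tpaths F)| = (t.+1 * #|F|)%N.
Proof.
case/andP => /forall_inP F_bound spF; rewrite -(eqP (trivIset_tpaths spF)).
rewrite big_imset /=; last by move=> i j _ _; apply: tpath_inj.
rewrite (eq_bigr (fun=> t.+1)) => [|i /F_bound /card_tpath //].
by rewrite sum_nat_const mulnC.
Qed.

Lemma tpath_family_size (F : {set 'I_N}) : tpath_family t N F -> (t.+1 * #|F| <= N)%N.
Proof. by move/card_cover_tpaths <-; rewrite -[X in (_ <= X)%N]card_ord max_card. Qed.

End TPaths.

Section AddTPaths.
Variables (N t : nat) (F : {set 'I_N}).
Hypothesis tF : tpath_family t N F.
Let U := cover (tpaths t F).

Lemma disjoint_tpaths P : nc_uniform_on t.+1 (~: U) P -> [disjoint P & tpaths t F].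
Proof.
case/and3P => partP _ _; rewrite -setI_eq0; apply/eqP/setP => B; rewrite !inE.
apply/negP => /andP [BP /imsetP [i iF EB]].
have /subsetP := partitionS partP BP; rewrite EB => /(_ i (tpath_self t i)).
by rewrite inE; apply/negP/negPn/bigcupP; exists (tpath t i); rewrite ?imset_f ?tpath_self.
Qed.

Lemma nc_uniform_add_tpaths P :
  nc_uniform_on t.+1 (~: U) P -> nc_uniform N t.+1 (P :|: tpaths t F).
Proof.
move=> ncuP; case/and3P: (ncuP) => partP ncP sizeP; case/andP: tF => /forall_inP F_bound spF.
have partPF : partition (P :|: tpaths t F) setT.
  apply/and3P; split.
  - by rewrite /cover bigcup_setU -/(cover P) (cover_partition partP) setUC setUCr.
  - apply: trivIsetU (partition_trivIset partP) (trivIset_tpaths spF) _.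
    by rewrite (cover_partition partP) disjoint_sym -setI_eq0 setICr.
  - rewrite !inE negb_or (partition0 partP); apply/imsetP => -[i _ /setP /(_ i)].
    by rewrite tpath_self inE.
have tPF := partition_trivIset partPF.
apply/and3P; split => //.
  apply/noncrossingP => B B' a b c d BPF B'PF nBB' abc cd aB cB bB' dB'.
  have /andP [/ltnW ab /ltnW bc] := abc.
  case/setUP: (BPF) => [BP|/imsetP [i _ EB]]; last first.
    apply/negP: nBB'; apply/negPn/eqP/(trivIset_block_eq tPF BPF B'PF _ bB').
    by rewrite EB in aB cB *; apply: tpath_convex aB cB; rewrite ab bc.
  case/setUP: (B'PF) => [B'P|/imsetP [j _ EB']]; last first.
    apply/negP: nBB'; apply/negPn/eqP/(trivIset_block_eq tPF BPF B'PF cB).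
    by rewrite EB' in bB' dB' *; apply: tpath_convex bB' dB'; rewrite bc ltnW.
  exact: (elimT noncrossingP ncP B B' a b c d BP B'P nBB' abc cd aB cB bB' dB').
apply/forall_inP => B /setUP [/(forall_inP sizeP) //|/imsetP [i iF ->]].
by rewrite card_tpath ?F_bound.
Qed.

Lemma nc_uniform_remove_tpaths s : nc_uniform N t.+1 s -> tpaths t F \subset s ->
  nc_uniform_on t.+1 (~: U) (s :\: tpaths t F).
Proof.
case/and3P => parts ncs sizes /subsetP Fs; have ts := partition_trivIset parts.
apply/and3P; split.
- apply/and3P; split; last by rewrite inE (partition0 parts) andbF.
  + apply/eqP/setP => x; rewrite inE; apply/bigcupP/idP => [[B]|xU].
      rewrite inE => /andP [BF Bs] xB; apply/bigcupP => -[B' B'F xB'].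
      by move: BF; rewrite (trivIset_block_eq ts Bs (Fs _ B'F) xB xB') B'F.
    have /bigcupP [B Bs xB] : x \in cover s by rewrite (cover_partition parts) inE.
    exists B => //; rewrite inE Bs andbT; apply: contraNN xU => BF.
    by apply/bigcupP; exists B.
  + exact: trivIsetD ts.
- exact: noncrossingS (subsetDl _ _) ncs.
- by apply/forall_inP => B; rewrite inE => /andP [_ /(forall_inP sizes)].
Qed.

Lemma card_nc_uniform_tpaths :
  #|[set P | nc_uniform_on t.+1 (~: U) P]| =
  #|[set s | nc_uniform N t.+1 s && (tpaths t F \subset s)]|.
Proof.
have addK : {in [set P | nc_uniform_on t.+1 (~: U) P],
              cancel (fun P => P :|: tpaths t F) (fun s => s :\: tpaths t F)}.
  by move=> P; rewrite inE => /disjoint_tpaths/setDidPl; rewrite setDUl setDv setU0.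
rewrite -(card_in_imset (can_in_inj addK)); apply: eq_card => s; rewrite inE.
apply/imsetP/andP => [[P]|[ncs Fs]].
  by rewrite inE => ncP ->; rewrite nc_uniform_add_tpaths ?subsetUr.
exists (s :\: tpaths t F); first by rewrite inE nc_uniform_remove_tpaths.
by rewrite setUC -{1}(setID s (tpaths t F)) (setIidPr Fs) setUC.
Qed.

Lemma mu_tpaths_compl :
  mu t (N - t.+1 * #|F|) = #|[set s | nc_uniform N t.+1 s && (tpaths t F \subset s)]|.
Proof.
by rewrite -card_nc_uniform_tpaths card_nc_uniform_on -(card_cover_tpaths tF) [#|~: _|]cardsCs setCK card_ord.
Qed.

End AddTPaths.

Lemma nested_tpath_block N t (s : {set {set 'I_N}}) (B : {set 'I_N}) (x y : 'I_N) :
  nc_uniform N t.+1 s -> B \in s -> x \in B -> y \in B ->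
  (forall z, z \in B -> (x <= z <= y)%N) ->
  exists2 i : 'I_N, tpath t i \in s & (x <= i)%N && (i + t <= y)%N.
Proof.
case/and3P => parts ncP /forall_inP sizes.
have ts := partition_trivIset parts.
have [n] := ubnP (y - x); elim: n B x y => // n IHn B x y yx_lt Bs xB yB Bxy.
have /andP [_ xy] := Bxy x xB.
case: (boolP [forall z : 'I_N, (x <= z <= y)%N ==> (z \in B)]) => [/forallP full|].
  have EB : B = tpath (y - x) x.
    apply/setP => z; rewrite inE; apply/idP/idP => [/Bxy|xz]; first lia.
    by apply: (implyP (full z)); lia.
  have yx_t : (y - x = t)%N.
    have yN := ltn_ord y.
    by apply/eqP; rewrite -eqSS -(eqP (sizes B Bs)) EB card_tpath //; lia.
  by exists x; [rewrite -yx_t -EB | lia].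
(* Otherwise the block of a point of [x, y] missing from [B] lies strictly inside
   (x, y), and has a smaller hull. *)
case/forallPn => j; rewrite negb_imply => /andP [le_xjy jB].
have lt_xjy : (x < j < y)%N.
  have /andP [le_xj le_jy] := le_xjy.
  rewrite !ltn_neqAle le_xj le_jy !andbT.
  by apply/andP; split; apply: (contraNneq _ jB) => /val_inj; [move=> <- | move=> ->].
have jcov : j \in cover s by rewrite (cover_partition parts) inE.
set B' := pblock s j; have B's : B' \in s := pblock_mem jcov.
have jB' : j \in B' by rewrite mem_pblock.
have nBB' : B != B' by apply: contraNneq jB => ->.
have inner := noncrossing_nested ts ncP Bs B's nBB' xB yB jB' lt_xjy.
have [x' x'B' [y' y'B' B'x'y']] : exists2 x' : 'I_N, x' \in B' &
    exists2 y' : 'I_N, y' \in B' & forall z, z \in B' -> (x' <= z <= y')%N.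
  by apply: set_hull; apply/set0Pn; exists j.
have /andP [xx' _] := inner x' x'B'; have /andP [_ y'y] := inner y' y'B'.
have /andP [_ x'y'] := B'x'y' x' x'B'.
have lt_n : (y' - x' < n)%N by clear -yx_lt xx' x'y' y'y; lia.
have [i ti_s /andP [x'i iy']] := IHn B' x' y' lt_n B's x'B' y'B' B'x'y'.
by exists i => //; clear -xx' x'i iy' y'y; lia.
Qed.

Lemma homo_leq_squeeze (g : nat -> nat) a b c : {homo g : m n / (m <= n)%N} ->
  (a <= b <= c)%N -> g a = g c -> g b = g a.
Proof.
move=> g_homo /andP [ab bc] gac; apply/eqP; rewrite eqn_leq (g_homo _ _ ab) andbT gac.
exact: g_homo.
Qed.

(* [g j] is the index of the part containing position [j] (in the application,
   [seg ns]); only the monotonicity of [g] matters. *)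
Section Parts.
Variables (N t : nat) (g : nat -> nat).

Definition tpath_in_part (i : 'I_N) : bool := (i + t < N)%N && (g i == g (i + t)).

Definition part_tpath_family (F : {set 'I_N}) : bool :=
  [forall i in F, tpath_in_part i] && tpath_spaced t F.

Definition part_tpath_starts (s : {set {set 'I_N}}) : {set 'I_N} :=
  [set i : 'I_N | tpath_in_part i && (tpath t i \in s)].

Lemma part_tpath_familyW F : part_tpath_family F -> tpath_family t N F.
Proof.
case/andP => /forall_inP F_part spF; apply/andP; split => //.
by apply/forall_inP => i /F_part /andP [].
Qed.

Lemma part_tpath_family_starts (s : {set {set 'I_N}}) (F : {set 'I_N}) :
  trivIset s -> F \subset part_tpath_starts s -> part_tpath_family F.
Proof.
move=> ts /subsetP Fs; apply/andP; split.
  by apply/forall_inP => i /Fs; rewrite inE => /andP [].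
apply/tpath_spacedP => i j iF jF ij.
move: (Fs i iF) (Fs j jF); rewrite !inE => /andP [_ ti_s] /andP [_ tj_s].
rewrite ltnNge; apply/negP => jit.
have: tpath t i != tpath t j by rewrite (inj_eq (@tpath_inj N t)) -val_eqE neq_ltn ij.
apply/negP/negPn/eqP/(trivIset_block_eq ts ti_s tj_s _ (tpath_self t j)).
by rewrite inE (ltnW ij) jit.
Qed.

Lemma tpaths_sub_starts (s : {set {set 'I_N}}) (F : {set 'I_N}) : part_tpath_family F ->
  (tpaths t F \subset s) = (F \subset part_tpath_starts s).
Proof.
case/andP => /forall_inP F_part _.
apply/subsetP/subsetP => [Fs i iF|Fs _ /imsetP [i iF ->]].
  by rewrite inE F_part ?Fs ?imset_f.
by move: (Fs i iF); rewrite inE => /andP [].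
Qed.

Hypothesis g_homo : {homo g : m n / (m <= n)%N}.

Lemma part_tpath_starts_eq0 (s : {set {set 'I_N}}) : nc_uniform N t.+1 s ->
  (part_tpath_starts s == set0) = [forall B in s, exists x in B, exists y in B, g x != g y].
Proof.
move=> ncs; have /and3P [parts _ _] := ncs.
apply/eqP/forall_inP => [starts0 B Bs|split_s]; last first.
  apply/setP => i; rewrite !inE; apply/negP => /andP [/andP [_ /eqP gi] ti_s].
  have /exists_inP [x xi /exists_inP [y yi]] := split_s _ ti_s; apply/negP; rewrite negbK.
  by rewrite !inE in xi yi; rewrite (homo_leq_squeeze g_homo xi gi) (homo_leq_squeeze g_homo yi gi).
apply: contraT => /exists_inPn gB.
have {}gB x y : x \in B -> y \in B -> g x = g y.
  by move=> xB yB; move/exists_inPn: (gB x xB) => /(_ y yB); rewrite negbK => /eqP.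
have [x xB [y yB Bxy]] := set_hull (partition_neq0 parts Bs).
have [i ti_s /andP [xi iy]] := nested_tpath_block ncs Bs xB yB Bxy.
have: i \in part_tpath_starts s.
  have yN := ltn_ord y; rewrite inE ti_s andbT; apply/andP; split; first lia.
  have gx : g x = g y by exact: gB.
  by rewrite (homo_leq_squeeze g_homo _ gx) ?(homo_leq_squeeze g_homo _ gx) //; lia.
by rewrite starts0 inE.
Qed.

End Parts.

Lemma seg_homo ns : {homo seg ns : j k / (j <= k)%N}.
Proof. by move=> j k jk; apply: sub_count => i /= /leq_trans; apply. Qed.

Lemma seg_cons n ns j :
  seg (n :: ns) j = if (j < n)%N then 0%N else (seg ns (j - n)).+1.
Proof.
rewrite /seg /= -add1n iotaDl count_map /= take0 addn0.
case: ltnP => jn.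
  by rewrite /= (@eq_in_count _ _ pred0) ?count_pred0 // => i _ /=; apply/negbTE; lia.
by rewrite /= add1n; congr _.+1; apply: eq_count => i /=; rewrite add1n; apply/idP/idP; lia.
Qed.

Section CatSet.
Variables (t n M : nat).

Definition cat_set (F1 : {set 'I_n}) (F2 : {set 'I_M}) : {set 'I_(n + M)} :=
  lshift M @: F1 :|: @rshift n M @: F2.

Definition split_set (F : {set 'I_(n + M)}) : {set 'I_n} * {set 'I_M} :=
  (lshift M @^-1: F, @rshift n M @^-1: F).

Lemma lshift_neq_rshift (i : 'I_n) (j : 'I_M) : lshift M i != rshift n j.
Proof. by rewrite -val_eqE /= neq_ltn (leq_trans (ltn_ord i)) ?leq_addr. Qed.

Lemma mem_cat_set_l F1 F2 (i : 'I_n) : (lshift M i \in cat_set F1 F2) = (i \in F1).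
Proof.
rewrite inE mem_imset; last exact: lshift_inj.
by case: (i \in F1) => //=; apply/imsetP => -[j _ /eqP]; rewrite (negbTE (lshift_neq_rshift _ _)).
Qed.

Lemma mem_cat_set_r F1 F2 (j : 'I_M) : (rshift n j \in cat_set F1 F2) = (j \in F2).
Proof.
rewrite inE (mem_imset _ _ (@rshift_inj n M)) orbC.
by case: (j \in F2) => //=; apply/imsetP => -[i _ /eqP]; rewrite eq_sym (negbTE (lshift_neq_rshift _ _)).
Qed.

Lemma cat_setK : cancel (fun p => cat_set p.1 p.2) split_set.
Proof. by case=> F1 F2; congr (_, _); apply/setP => x; rewrite inE ?mem_cat_set_l ?mem_cat_set_r. Qed.

Lemma split_setK : cancel split_set (fun p => cat_set p.1 p.2).
Proof.
move=> F; apply/setP => x; case: (split_ordP x) => [i|j] ->.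
  by rewrite mem_cat_set_l inE.
by rewrite mem_cat_set_r inE.
Qed.

Lemma card_cat_set F1 F2 : #|cat_set F1 F2| = (#|F1| + #|F2|)%N.
Proof.
rewrite cardsU (card_imset _ (@lshift_inj n M)) (card_imset _ (@rshift_inj n M)).
suff -> : lshift M @: F1 :&: @rshift n M @: F2 = set0 by rewrite cards0 subn0.
apply/setP => x; rewrite !inE; apply/andP => -[/imsetP [i _ ->] /imsetP [j _ /eqP]].
by rewrite (negbTE (lshift_neq_rshift _ _)).
Qed.

Lemma forall_in_cat_set (P : pred 'I_(n + M)) F1 F2 :
  [forall x in cat_set F1 F2, P x] =
  [forall i in F1, P (lshift M i)] && [forall j in F2, P (rshift n j)].
Proof.
apply/forall_inP/andP => [H|[/forall_inP H1 /forall_inP H2] x].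
  by split; apply/forall_inP => i iF; apply: H; rewrite ?mem_cat_set_l ?mem_cat_set_r.
by case: (split_ordP x) => [i|j] ->; rewrite ?mem_cat_set_l ?mem_cat_set_r; [apply: H1|apply: H2].
Qed.

Lemma tpath_spaced_cat (F1 : {set 'I_n}) (F2 : {set 'I_M}) : [forall i in F1, i + t < n]%N ->
  tpath_spaced t (cat_set F1 F2) = tpath_spaced t F1 && tpath_spaced t F2.
Proof.
move=> /forall_inP F1_bound.
apply/tpath_spacedP/andP => [sp|[/tpath_spacedP sp1 /tpath_spacedP sp2] x y].
  split; apply/tpath_spacedP => i j iF jF ij.
    by apply: (sp (lshift M i) (lshift M j)); rewrite ?mem_cat_set_l.
  by move: (sp (rshift n i) (rshift n j)); rewrite !mem_cat_set_r /= -addnA !ltn_add2l; apply.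
case: (split_ordP x) => [i|j] ->; case: (split_ordP y) => [i'|j'] ->;
  rewrite ?mem_cat_set_l ?mem_cat_set_r /= => xF yF.
- exact: sp1.
- by move=> _; apply: leq_trans (F1_bound i xF) (leq_addr _ _).
- by move=> lt; have := ltn_ord i'; lia.
- by rewrite -addnA !ltn_add2l; apply: sp2.
Qed.

End CatSet.

Section SegCat.
Variables (t n : nat) (ns : seq nat).
Let M := sumn ns.

Lemma tpath_in_part_lshift (i : 'I_n) :
  tpath_in_part t (seg (n :: ns)) (lshift M i) = (i + t < n)%N.
Proof.
rewrite /tpath_in_part /= !seg_cons ltn_ord.
by case: (ltnP (i + t) n) => it /=; [rewrite eqxx andbT (leq_trans it) ?leq_addr | rewrite andbF].
Qed.

Lemma tpath_in_part_rshift (j : 'I_M) :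
  tpath_in_part t (seg (n :: ns)) (rshift n j) = tpath_in_part t (seg ns) j.
Proof.
rewrite /tpath_in_part /= !seg_cons -addnA !(ltnNge (n + _) n) !leq_addr /=.
by rewrite !addKn eqSS ltn_add2l.
Qed.

Lemma part_tpath_family_cat (F1 : {set 'I_n}) (F2 : {set 'I_M}) :
  part_tpath_family t (seg (n :: ns)) (cat_set F1 F2) =
  tpath_family t n F1 && part_tpath_family t (seg ns) F2.
Proof.
rewrite /part_tpath_family /tpath_family forall_in_cat_set.
rewrite (eq_forallb_in (fun i _ => tpath_in_part_lshift i)).
rewrite (eq_forallb_in (fun j _ => tpath_in_part_rshift j)).
case: (boolP [forall i in F1, i + t < n]%N) => //= F1_bound.
by rewrite tpath_spaced_cat // andbCA.
Qed.

End SegCat.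

Local Open Scope ring_scope.

Lemma Lt_widen t (p : {poly int}) K : (size p <= K)%N ->
  Lt t p = \sum_(i < K) p`_i * (mu t i)%:Z.
Proof.
move=> leK; rewrite /Lt (big_ord_widen K (fun i => p`_i * (mu t i)%:Z) leK) big_mkcond /=.
by apply: eq_bigr => i _; case: ltnP => // /(nth_default 0) ->; rewrite mul0r.
Qed.

Lemma LtD t : {morph Lt t : p q / p + q}.
Proof.
move=> p q; pose K := maxn (size p) (size q).
rewrite (@Lt_widen _ (p + q) K) ?size_polyD // (@Lt_widen _ p K) ?leq_maxl //.
rewrite (@Lt_widen _ q K) ?leq_maxr // -big_split /=.
by apply: eq_bigr => i _; rewrite coefD mulrDl.
Qed.

Lemma Lt0 t : Lt t 0 = 0.
Proof. by rewrite /Lt size_poly0 big_ord0. Qed.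

Lemma Lt_sum t (I : finType) (P : pred I) (G : I -> {poly int}) :
  Lt t (\sum_(i | P i) G i) = \sum_(i | P i) Lt t (G i).
Proof. exact: (big_morph _ (LtD t) (Lt0 t)). Qed.

Lemma LtZXn t c d : Lt t (c *: 'X^d) = c * (mu t d)%:Z.
Proof.
have size_le : (size (c *: 'X^d) <= d.+1)%N.
  by rewrite (leq_trans (size_scale_leq _ _)) // size_polyXn.
rewrite (Lt_widen t size_le) big_ord_recr /= big1 ?add0r => [|i _].
  by rewrite coefZ coefXn eqxx mulr1.
by rewrite coefZ coefXn (ltn_eqF (ltn_ord i)) mulr0 mul0r.
Qed.

Lemma sum_subset_sign (T : finType) (A : {set T}) :
  \sum_(F : {set T} | F \subset A) (-1) ^+ #|F| = (A == set0)%:R :> int.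
Proof.
have [->|[a aA]] := set_0Vmem A.
  rewrite eqxx (eq_bigl (pred1 set0)) => [|F]; last by rewrite subset0.
  by rewrite big_pred1_eq cards0.
have /negbTE -> : A != set0 by apply/set0Pn; exists a.
pose flip (F : {set T}) := if a \in F then F :\ a else a |: F.
have flipK : involutive flip.
  by move=> F; rewrite /flip; case: (boolP (a \in F)) => aF; rewrite ?setD11 ?setD1K ?setU11 ?setU1K.
rewrite (bigID (fun F : {set T} => a \in F)) /= [X in X + _](reindex_inj (inv_inj flipK)) /=.
rewrite [X in X + _](eq_bigl (fun F : {set T} => (F \subset A) && (a \notin F))) => [|F]; last first.
  rewrite /flip; case: (boolP (a \in F)) => aF /=; first by rewrite setD11 !andbF.
  by rewrite setU11 subUset sub1set aA !andbT.
rewrite -big_split big1 // => F /andP [_ aF].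
by rewrite /= /flip (negbTE aF) cardsU1 aF exprS mulN1r addNr.
Qed.

Definition chebU_parts t ns : {poly int} :=
  \sum_(F : {set 'I_(sumn ns)} | part_tpath_family t (seg ns) F)
     (-1) ^+ #|F| *: 'X^(sumn ns - t.+1 * #|F|).

Lemma chebU_parts_nil t : chebU_parts t [::] = 1.
Proof.
rewrite /chebU_parts (big_pred1 set0) => [|F]; first by rewrite cards0 scale1r.
rewrite /= (_ : F = set0) ?eqxx; last by apply/setP => -[].
by apply/andP; split; apply/forall_inP => i; rewrite in_set0.
Qed.

Lemma chebU_parts_cons t n ns : chebU t n * chebU_parts t ns = chebU_parts t (n :: ns).
Proof.
rewrite /chebU /chebU_parts big_distrl /=.
under eq_bigr do rewrite big_distrr /=.
rewrite pair_big /= (reindex (fun p => cat_set p.1 p.2)) /=; last first.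
  by exists (@split_set n (sumn ns)) => p _; [apply: cat_setK | apply: split_setK].
apply: eq_big => [[F1 F2]|[F1 F2] /andP [tF1 tF2]] /=; first by rewrite part_tpath_family_cat.
rewrite -scalerAl -scalerAr scalerA -!exprD card_cat_set; congr (_ *: 'X^_).
have := tpath_family_size tF1; have := tpath_family_size (part_tpath_familyW tF2).
by rewrite mulnDr; set k1 := (t.+1 * #|F1|)%N; set k2 := (t.+1 * #|F2|)%N; lia.
Qed.

Lemma prod_chebU t ns : \prod_(n <- ns) chebU t n = chebU_parts t ns.
Proof.
elim: ns => [|n ns IHns]; first by rewrite big_nil chebU_parts_nil.
by rewrite big_cons IHns chebU_parts_cons.
Qed.

Lemma card_set_as_sum (T : finType) (P Q : pred T) :
  #|[set x | P x && Q x]|%:Z = \sum_(x | P x) (Q x)%:R.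
Proof.
rewrite -sum1_card (big_morph Posz PoszD (erefl _)) big_mkcond [RHS]big_mkcond /=.
by apply: eq_bigr => x _; rewrite inE; case: (P x); case: (Q x).
Qed.

Lemma signed_sum_part_tpath_families N t (g : nat -> nat) (s : {set {set 'I_N}}) :
  {homo g : m n / (m <= n)%N} -> nc_uniform N t.+1 s ->
  \sum_(F | part_tpath_family t g F) (-1) ^+ #|F| * (tpaths t F \subset s)%:R =
  [forall B in s, exists x in B, exists y in B, g x != g y]%:R :> int.
Proof.
move=> g_homo ncs; have /and3P [parts _ _] := ncs.
rewrite -(part_tpath_starts_eq0 g_homo ncs) -sum_subset_sign.
rewrite (eq_bigr (fun F => if tpaths t F \subset s then (-1) ^+ #|F| else 0)) => [|F _]; last first.
  by case: (_ \subset _); rewrite ?mulr1 ?mulr0.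
rewrite -big_mkcondr /=; apply: eq_bigl => F.
apply/andP/idP => [[partF]|Fs]; first by rewrite (tpaths_sub_starts s partF).
have partF := part_tpath_family_starts (partition_trivIset parts) Fs.
by rewrite (tpaths_sub_starts s partF).
Qed.

(* The argument does not use [1 <= t]. *)
Theorem mainTheorem1 (t : nat) (ns : seq nat) : (1 <= t)%N ->
  Lt t (\prod_(n <- ns) chebU t n) =
  (#|[set P : {set {set 'I_(sumn ns)}} |
        nc_uniform (sumn ns) t.+1 P && no_block_in_one_part ns P]| : nat)%:Z.
Proof.
move=> _; rewrite prod_chebU /chebU_parts Lt_sum.
under eq_bigr => F partF do
  rewrite LtZXn (mu_tpaths_compl (part_tpath_familyW partF)) card_set_as_sum mulr_sumr.
rewrite exchange_big card_set_as_sum /=; apply: eq_bigr => s ncs.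
exact: signed_sum_part_tpath_families (@seg_homo ns) ncs.
Qed.
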